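(* The set $\mathcal{S}$ of all signatures of continuous bounded variation paths is a linearly independent subset of $T((V))$; that is, any finitely many pairwise distinct elements of $\mathcal{S}$ are linearly independent.
   Context: $V$ is a finite-dimensional real vector space and $T((V))=\prod_{k\ge0}V^{\otimes k}$ is the space of formal tensor series. For a continuous bounded variation path $\gamma$ and $s<t$, $S(\gamma)_{s,t}=1+\sum_{k\ge1}\int_{s<u_1<\dots<u_k<t}d\gamma_{u_1}\otimes\cdots\otimes d\gamma_{u_k}\in T((V))$, and $\mathcal{S}=\{S(\gamma)_{s,t}:\gamma\text{ continuous of bounded variation},\ s<t\}$. *)

From HB Require Import structures.
From mathcomp Require Import all_boot all_order all_algebra.
From mathcomp Require Import all_classical all_reals all_analysis.
Set Implicit Arguments. Unset Strict Implicit. Unset Printing Implicit Defensive.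
Import Order.TTheory GRing.Theory Num.Theory.
Import numFieldNormedType.Exports.
Local Open Scope classical_set_scope.
Local Open Scope ring_scope.

(* V = R^d with standard basis e_0,...,e_{d-1}.  An element of
   T((V)) = prod_k V^{(x)k} is represented by its coefficients on the basis
   e_{i1} (x) ... (x) e_{ik} of V^{(x)k}, i.e. as a function from words
   (seq 'I_d, the empty word giving the degree-0 component) to R. *)
Definition tensor_series (R : realType) (d : nat) := seq 'I_d -> R.

Definition is_RS_integral (R : realType) (f g : R -> R) (a b I : R) : Prop :=
  forall e : R, 0 < e -> exists2 delta : R, 0 < delta &
    forall (n : nat) (x tau : nat -> R),
      x 0%N = a -> x n = b ->
      (forall j, (j < n)%N ->
         [/\ x j < x j.+1, x j.+1 - x j < delta & x j <= tau j <= x j.+1]) ->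
      `| \sum_(j < n) f (tau j) * (g (x j.+1) - g (x j)) - I | < e.

(* The Riemann--Stieltjes integral \int_a^b f dg (0 when it does not exist). *)
Definition RS_int (R : realType) (f g : R -> R) (a b : R) : R :=
  xget 0 [set I | is_RS_integral f g a b I].

(* gamma i : R -> R is the i-th coordinate of the path.
   sig_rev gamma s r t, for r the REVERSED word [i_k; ...; i_1], is the
   iterated integral  int_{s<u1<...<uk<t} d gamma^{i1}_{u1} ... d gamma^{ik}_{uk},
   computed recursively:  X^{w i}_{s,t} = int_s^t X^{w}_{s,u} d gamma^{i}_u. *)
Fixpoint sig_rev (R : realType) (d : nat) (gamma : 'I_d -> R -> R) (s : R)
    (r : seq 'I_d) (t : R) : R :=
  match r with
  | [::] => 1
  | i :: r' => RS_int (fun u => sig_rev gamma s r' u) (gamma i) s t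
  end.

Definition signature (R : realType) (d : nat) (gamma : 'I_d -> R -> R)
    (s t : R) : tensor_series R d :=
  fun w => sig_rev gamma s (rev w) t.

Definition cont_BV_path (R : realType) (d : nat) (gamma : 'I_d -> R -> R)
    (s t : R) : Prop :=
  forall i : 'I_d,
    {within `[s, t], continuous (gamma i)} /\ bounded_variation s t (gamma i).

Definition signatures (R : realType) (d : nat) : set (tensor_series R d) :=
  [set X | exists (gamma : 'I_d -> R -> R) (s t : R),
     [/\ s < t, cont_BV_path gamma s t & X = signature gamma s t]].

(* Signatures are characters of the shuffle algebra: the coordinate at the empty
   word is 1, and the product of the coordinates at two words is the sum of the
   coordinates over their shuffles.  This follows, by induction on the lengths of
   the words, from integration by parts for Riemann-Stieltjes integrals of
   continuous integrands against continuous paths of bounded variation.  Distinct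
   characters are linearly independent: if two of them differ at a word u,
   evaluating a relation at the products of u with all words and subtracting the
   relation scaled by the value of one of them at u gives a shorter relation. *)

From mathcomp Require Import all_boot all_order all_algebra.
From mathcomp Require Import all_classical all_reals all_analysis.
From mathcomp Require Import ring lra.
Import Order.TTheory GRing.Theory Num.Theory numFieldNormedType.Exports.
Local Open Scope classical_set_scope.
Local Open Scope ring_scope.

Set Implicit Arguments. Unset Strict Implicit. Unset Printing Implicit Defensive.

Lemma telescope_sumr_ord (V : zmodType) (F : nat -> V) n :
  \sum_(j < n) (F j.+1 - F j) = F n - F 0%N.
Proof. by rewrite -(big_mkord xpredT (fun j => F j.+1 - F j)) telescope_sumr. Qed.

Section TaggedPartitions.
Variable R : realType.
Implicit Types (f g : R -> R) (a b dl e : R) (x tau : nat -> R).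

Definition RS_sum f g n x tau := \sum_(j < n) f (tau j) * (g (x j.+1) - g (x j)).

Definition tagged_partition a b dl n x tau :=
  [/\ x 0%N = a, x n = b & forall j, (j < n)%N ->
     [/\ x j < x j.+1, x j.+1 - x j < dl & x j <= tau j <= x j.+1]].

Lemma is_RS_integralP f g a b I : is_RS_integral f g a b I <->
  forall e, 0 < e -> exists2 dl, 0 < dl & forall n x tau,
    tagged_partition a b dl n x tau -> `|RS_sum f g n x tau - I| < e.
Proof.
split=> H e /H [dl dl0 Hdl]; exists dl => // n x tau.
  by case=> *; apply: Hdl.
by move=> *; apply: Hdl; split.
Qed.

Lemma tagged_partition_widen a b dl dl' n x tau : dl <= dl' ->
  tagged_partition a b dl n x tau -> tagged_partition a b dl' n x tau.
Proof.
move=> le_dl [x0 xn Px]; split => // j /Px [xj mesh tj]; split => //.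
exact: lt_le_trans mesh le_dl.
Qed.

Lemma tagged_partition_minl a b dl dl' n x tau :
  tagged_partition a b (Num.min dl dl') n x tau -> tagged_partition a b dl n x tau.
Proof. by apply: tagged_partition_widen; rewrite ge_min lexx. Qed.

Lemma tagged_partition_minr a b dl dl' n x tau :
  tagged_partition a b (Num.min dl dl') n x tau -> tagged_partition a b dl' n x tau.
Proof. by apply: tagged_partition_widen; rewrite ge_min lexx orbT. Qed.

Section OnePartition.
Variables (a b dl : R) (n : nat) (x tau : nat -> R).
Hypothesis P : tagged_partition a b dl n x tau.

Lemma tagged_partition_le i j : (i <= j <= n)%N -> x i <= x j.
Proof.
have [_ _ Px] := P; case/andP => + jn; elim: j jn => [|j IH] jn.
  by rewrite leqn0 => /eqP ->.
rewrite leq_eqVlt => /orP [/eqP -> //| ij].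
have [xj _ _] := Px j jn.
exact: le_trans (IH (ltnW jn) ij) (ltW xj).
Qed.

Lemma tagged_partition_point j : (j <= n)%N -> a <= x j <= b.
Proof.
have [<- <- _] := P => jn.
by rewrite !tagged_partition_le ?leq0n ?jn ?leqnn.
Qed.

Lemma tagged_partition_cell j : (j < n)%N -> a <= x j /\ x j.+1 <= b.
Proof.
move=> jn; have /andP [-> _] := tagged_partition_point (ltnW jn).
by have /andP [_ ->] := tagged_partition_point jn.
Qed.

Lemma tagged_partition_tag j : (j < n)%N -> a <= tau j <= b.
Proof.
move=> jn; have [_ _ /(_ j jn) [_ _ /andP [t1 t2]]] := P.
have [aj jb] := tagged_partition_cell jn.
by rewrite (le_trans aj t1) (le_trans t2 jb).
Qed.

End OnePartition.

Definition uniform_partition a b N j : R := a + j%:R * ((b - a) / N.+1%:R).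

Lemma uniform_partition_tagged a b dl N : a < b -> (b - a) / N.+1%:R < dl ->
  tagged_partition a b dl N.+1 (uniform_partition a b N) (uniform_partition a b N).
Proof.
move=> ab mesh; rewrite /uniform_partition; set h := (b - a) / _ in mesh *.
have h0 : 0 < h by rewrite divr_gt0 ?subr_gt0 ?ltr0n.
split => /=.
- by rewrite mul0r addr0.
- by rewrite /h mulrC divfK ?pnatr_eq0 // addrC subrK.
move=> j _; rewrite -natr1 mulrDl mul1r addrA; split.
- by rewrite ltrDl.
- lra.
- by rewrite lexx lerDl ltW.
Qed.

Lemma uniform_partition_mesh a b dl : 0 < dl ->
  exists N0, forall N, (N0 <= N)%N -> (b - a) / N.+1%:R < dl.
Proof.
move=> dl0; exists (Num.truncn ((b - a) / dl)) => N le_N.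
rewrite ltr_pdivrMr ?ltr0n // mulrC -ltr_pdivrMr //.
by apply: lt_le_trans (truncnS_gt _) _; rewrite ler_nat ltnS.
Qed.

Lemma tagged_partition_exists a b dl : a < b -> 0 < dl ->
  exists n x, tagged_partition a b dl n x x.
Proof.
move=> ab /(uniform_partition_mesh a b) [N mesh].
by exists N.+1, (uniform_partition a b N); apply/uniform_partition_tagged/mesh.
Qed.

End TaggedPartitions.

Section RiemannStieltjesExistence.
Variable R : realType.
Implicit Types (f g h V : R -> R) (a b u v p q z dl e : R) (x y tau sg : nat -> R).

Definition controlled g V a b := forall u v, a <= u -> u <= v -> v <= b ->
  `|g v - g u| <= V v - V u.

Definition unif_cont_on f a b := forall e, 0 < e -> exists2 dl, 0 < dl &
  forall u v, a <= u <= b -> a <= v <= b -> `|u - v| < dl -> `|f u - f v| < e.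

Definition bounded_on f a b M := forall u, a <= u <= b -> `|f u| <= M.

(* The increment of [h] over [[u, v]] intersected with [[p, q]], and [0] when
   the intersection is empty. *)
Definition overlap_incr h u v p q :=
  h (Num.max (Num.max u p) (Num.min v q)) - h (Num.max u p).

Lemma overlap_incrC h u v p q : overlap_incr h u v p q = overlap_incr h p q u v.
Proof. by rewrite /overlap_incr (maxC u p) (minC v q). Qed.

Lemma overlap_incr_clamp h u v p q : u <= v -> p <= q ->
  overlap_incr h u v p q = h (Num.min (Num.max q u) v) - h (Num.min (Num.max p u) v).
Proof.
move=> uv pq; rewrite /overlap_incr.
have [qu|uq] := ltP q u.
  have pu : p <= u by exact: ltW (le_lt_trans pq qu).
  rewrite (max_l pu) (min_r (ltW (lt_le_trans qu uv))) (max_l (ltW qu)).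
  by rewrite (max_r pu) (min_l uv) subrr.
have [vp|pv] := ltP v p.
  have up : u <= p by exact: ltW (le_lt_trans uv vp).
  rewrite (max_r up) (min_l (ltW (lt_le_trans vp pq))) (max_l (ltW vp)) subrr.
  by rewrite (min_r (ltW (lt_le_trans vp pq))) (max_l up) (min_r (ltW vp)) subrr.
rewrite [Num.min (Num.max p u) v]min_l; last by rewrite ge_max pv uv.
by rewrite (maxC p u) (minC q v) max_r // le_min !ge_max uv uq pv pq.
Qed.

Lemma sum_overlap_incr h a b dl m y sg u v :
  tagged_partition a b dl m y sg -> a <= u -> u <= v -> v <= b ->
  \sum_(k < m) overlap_incr h u v (y k) (y k.+1) = h v - h u.
Proof.
move=> [y0 ym Py] au uv vb.
rewrite (eq_bigr (fun k : 'I_m => h (Num.min (Num.max (y k.+1) u) v) -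
    h (Num.min (Num.max (y k) u) v))); last first.
  by move=> k _; have [/ltW yk _ _] := Py k (ltn_ord k); rewrite overlap_incr_clamp.
rewrite (telescope_sumr_ord (fun k => h (Num.min (Num.max (y k) u) v))) ym y0.
by rewrite (max_l (le_trans uv vb)) (min_r vb) (max_r au) (min_l uv).
Qed.

Lemma RS_sum_overlap f g a b dl dl' n x tau m y sg :
  tagged_partition a b dl n x tau -> tagged_partition a b dl' m y sg ->
  RS_sum f g n x tau = \sum_(j < n) \sum_(k < m)
    f (tau j) * overlap_incr g (x j) (x j.+1) (y k) (y k.+1).
Proof.
move=> P Q; apply: eq_bigr => j _; rewrite -mulr_sumr.
have [aj jb] := tagged_partition_cell P (ltn_ord j).
have [_ _ /(_ j (ltn_ord j)) [/ltW xj _ _]] := P.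
by rewrite (sum_overlap_incr g Q aj xj jb).
Qed.

Lemma RS_sum_const c g a b dl n x tau : tagged_partition a b dl n x tau ->
  RS_sum (fun _ => c) g n x tau = c * (g b - g a).
Proof.
by case=> x0 xn _; rewrite /RS_sum -mulr_sumr (telescope_sumr_ord (g \o x)) /= xn x0.
Qed.

Lemma controlled_ge0 g V a b : a <= b -> controlled g V a b -> 0 <= V b - V a.
Proof. by move=> ab gV; apply: le_trans (gV a b (lexx a) ab (lexx b)). Qed.

Lemma controlled_sub g V a b a' b' : a <= a' -> b' <= b ->
  controlled g V a b -> controlled g V a' b'.
Proof.
move=> aa' b'b gV u v a'u uv vb'.
by apply: gV (le_trans aa' a'u) uv (le_trans vb' b'b).
Qed.

Lemma unif_cont_on_sub f a b a' b' : a <= a' -> b' <= b ->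
  unif_cont_on f a b -> unif_cont_on f a' b'.
Proof.
move=> aa' b'b uf e /uf [dl dl0 Hdl]; exists dl => // u v.
move=> /andP [u1 u2] /andP [v1 v2]; apply: Hdl.
  by rewrite (le_trans aa' u1) (le_trans u2 b'b).
by rewrite (le_trans aa' v1) (le_trans v2 b'b).
Qed.

Lemma overlap_incr_bound g V a b u v p q z e : controlled g V a b ->
  a <= u -> u <= v -> v <= b -> a <= p -> p <= q -> q <= b ->
  (Num.max u p <= Num.min v q -> `|z| <= e) ->
  `|z * overlap_incr g u v p q| <= e * overlap_incr V u v p q.
Proof.
move=> gV au uv vb ap pq qb ze; rewrite /overlap_incr.
have [_|meet] := ltP (Num.min v q) (Num.max u p).
  by rewrite !subrr !mulr0 normr0.
rewrite normrM; apply: ler_pM => //; first exact: ze.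
by apply: gV; rewrite ?le_max ?au // ge_min vb.
Qed.

Lemma RS_sum_cauchy f g V a b dl e n x tau m y sg : controlled g V a b ->
  (forall u v, a <= u <= b -> a <= v <= b -> `|u - v| < dl + dl ->
     `|f u - f v| <= e) ->
  tagged_partition a b dl n x tau -> tagged_partition a b dl m y sg ->
  `|RS_sum f g n x tau - RS_sum f g m y sg| <= e * (V b - V a).
Proof.
move=> gV fe P Q.
(* Both sums, and [V b - V a], are sums over the pairwise intersections of cells. *)
have sumQ : RS_sum f g m y sg = \sum_(j < n) \sum_(k < m)
    f (sg k) * overlap_incr g (x j) (x j.+1) (y k) (y k.+1).
  rewrite (RS_sum_overlap f g Q P) exchange_big; apply: eq_bigr => j _.
  by apply: eq_bigr => k _; rewrite overlap_incrC.
rewrite -[V b - V a]mul1r -(RS_sum_const 1 V P) !(RS_sum_overlap _ _ P Q) sumQ.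
rewrite -sumrB mulr_sumr.
apply: le_trans (ler_norm_sum _ _ _) _; apply: ler_sum => j _.
rewrite -sumrB mulr_sumr; apply: le_trans (ler_norm_sum _ _ _) _.
apply: ler_sum => k _; rewrite -mulrBl mul1r.
have [_ _ /(_ j (ltn_ord j)) [xj mesh_j /andP [tj1 tj2]]] := P.
have [_ _ /(_ k (ltn_ord k)) [yk mesh_k /andP [sk1 sk2]]] := Q.
have [aj jb] := tagged_partition_cell P (ltn_ord j).
have [ak kb] := tagged_partition_cell Q (ltn_ord k).
apply: (overlap_incr_bound gV aj (ltW xj) jb ak (ltW yk) kb).
rewrite le_min !ge_max => /andP [/andP [h1 h2] /andP [h3 h4]].
apply: fe.
- by rewrite (le_trans aj tj1) (le_trans tj2 jb).
- by rewrite (le_trans ak sk1) (le_trans sk2 kb).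
- by rewrite ltr_norml; apply/andP; split; lra.
Qed.

Lemma RS_sum_cauchy_mesh f g V a b : a < b -> controlled g V a b ->
  unif_cont_on f a b -> forall e, 0 < e -> exists2 dl, 0 < dl &
    forall n x tau m y sg, tagged_partition a b dl n x tau ->
    tagged_partition a b dl m y sg -> `|RS_sum f g n x tau - RS_sum f g m y sg| <= e.
Proof.
move=> ab gV uf e e0.
set K := V b - V a + 1.
have K0 : 0 < K by have := controlled_ge0 (ltW ab) gV; rewrite /K; lra.
have [dl dl0 Hdl] := uf _ (divr_gt0 e0 K0).
exists (dl / 2) => [|n x tau m y sg P Q]; first by rewrite divr_gt0.
apply: le_trans (RS_sum_cauchy (e := e / K) gV _ P Q) _.
  by move=> u v hu hv; rewrite -splitr => /(Hdl _ _ hu hv) /ltW.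
by rewrite mulrAC ler_pdivrMr // ler_wpM2l ?(ltW e0) // /K lerDl.
Qed.

Lemma RS_integral_exists f g V a b : a < b -> controlled g V a b ->
  unif_cont_on f a b -> exists I, is_RS_integral f g a b I.
Proof.
move=> ab gV uf; have C := RS_sum_cauchy_mesh ab gV uf.
pose S N := RS_sum f g N.+1 (uniform_partition a b N) (uniform_partition a b N).
have e2 e : 0 < e -> 0 < e / 2 by move=> e0; rewrite divr_gt0.
have SP dl : 0 < dl -> exists N0, forall N, (N0 <= N)%N ->
    tagged_partition a b dl N.+1 (uniform_partition a b N) (uniform_partition a b N).
  by move=> /(uniform_partition_mesh a b) [N0 mesh]; exists N0 => N /mesh;
    apply: uniform_partition_tagged.
have cS : cvg (S @ \oo).
  apply: cauchy_cvg; apply: cauchy_exP => e e0.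
  have [dl dl0 Hdl] := C _ (e2 _ e0); have [N0 HN0] := SP _ dl0.
  exists (S N0), N0 => // N /= le_N; rewrite -ball_normE /ball_ /=.
  apply: le_lt_trans (Hdl _ _ _ _ _ _ (HN0 _ (leqnn _)) (HN0 _ le_N)) _.
  by rewrite ltr_pdivrMr // ltr_pMr // ltr1n.
exists (lim (S @ \oo)); apply/is_RS_integralP => e e0.
have [dl dl0 Hdl] := C _ (e2 _ e0); exists dl => // n x tau P.
have [N0 HN0] := SP _ dl0.
have /cvgrPdist_lt /(_ _ (e2 _ e0)) [N1 _ HN1] := cS.
have close := Hdl _ _ _ _ _ _ P (HN0 _ (leq_maxl N0 N1)).
have := HN1 _ (leq_maxr N0 N1); rewrite /= -/(S _) => far.
rewrite [e]splitr; apply: le_lt_trans (ler_distD (S (maxn N0 N1)) _ _) _.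
by apply: ler_ltD close _; rewrite distrC.
Qed.

End RiemannStieltjesExistence.

Section RiemannStieltjesProperties.
Variable R : realType.
Implicit Types (f g h V : R -> R) (a b c u v dl e M : R) (x y tau sg : nat -> R).

Lemma is_RS_integral_unique f g a b I J : a < b ->
  is_RS_integral f g a b I -> is_RS_integral f g a b J -> I = J.
Proof.
move=> ab /is_RS_integralP HI /is_RS_integralP HJ.
apply/eqP; rewrite -subr_eq0 -normr_le0; apply/ler_addgt0Pr => e e0.
have e2 : 0 < e / 2 by rewrite divr_gt0.
have [d1 d10 Hd1] := HI _ e2; have [d2 d20 Hd2] := HJ _ e2.
have d0 : 0 < Num.min d1 d2 by rewrite lt_min d10 d20.
have [n [x P]] := tagged_partition_exists ab d0.
have := Hd1 _ _ _ (tagged_partition_minl P).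
have := Hd2 _ _ _ (tagged_partition_minr P).
set S := RS_sum f g n x x => hJ hI.
rewrite add0r [e]splitr; apply: ltW; apply: le_lt_trans (ler_distD S _ _) _.
by rewrite distrC; apply: ltrD.
Qed.

Lemma RS_intE f g a b I : a < b -> is_RS_integral f g a b I -> RS_int f g a b = I.
Proof.
move=> ab HI; rewrite /RS_int; case: xgetP => [J -> HJ|noJ].
  exact: is_RS_integral_unique HJ HI.
by case: (noJ I).
Qed.

Lemma RS_int_id f g a : RS_int f g a a = 0.
Proof.
rewrite /RS_int; case: xgetP => [J -> /is_RS_integralP HJ|//].
apply/eqP; rewrite -normr_le0; apply/ler_addgt0Pr => e /HJ [dl _ HJe].
have P0 : tagged_partition a a dl 0 (fun=> a) (fun=> a) by split.
by have := HJe _ _ _ P0; rewrite /RS_sum big_ord0 sub0r normrN add0r => /ltW.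
Qed.

Lemma is_RS_integral_eq f1 f2 g a b I : (forall u, a <= u <= b -> f1 u = f2 u) ->
  is_RS_integral f1 g a b I -> is_RS_integral f2 g a b I.
Proof.
move=> f12 /is_RS_integralP H; apply/is_RS_integralP => e /H [dl dl0 Hdl].
exists dl => // n x tau P.
have <- : RS_sum f1 g n x tau = RS_sum f2 g n x tau.
  by apply: eq_bigr => j _; rewrite f12 // (tagged_partition_tag P).
exact: Hdl.
Qed.

Lemma is_RS_integralD f1 f2 g a b I1 I2 : is_RS_integral f1 g a b I1 ->
  is_RS_integral f2 g a b I2 ->
  is_RS_integral (fun u => f1 u + f2 u) g a b (I1 + I2).
Proof.
move=> /is_RS_integralP H1 /is_RS_integralP H2; apply/is_RS_integralP => e e0.
have e2 : 0 < e / 2 by rewrite divr_gt0.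
have [d1 d10 Hd1] := H1 _ e2; have [d2 d20 Hd2] := H2 _ e2.
exists (Num.min d1 d2) => [|n x tau P]; first by rewrite lt_min d10 d20.
rewrite /RS_sum (eq_bigr _ (fun j _ => mulrDl _ _ _)) big_split /= opprD addrACA.
apply: le_lt_trans (ler_normD _ _) _; rewrite [e]splitr.
by apply: ltrD; [apply: Hd1; apply: tagged_partition_minl P
                |apply: Hd2; apply: tagged_partition_minr P].
Qed.

Lemma is_RS_integral_const c g a b :
  is_RS_integral (fun _ => c) g a b (c * (g b - g a)).
Proof.
apply/is_RS_integralP => e e0; exists 1 => // n x tau P.
by rewrite (RS_sum_const _ _ P) subrr normr0.
Qed.

Lemma is_RS_integral_sum (T : Type) (s : seq T) (F : T -> R -> R) (I : T -> R) g a b :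
  (forall i, is_RS_integral (F i) g a b (I i)) ->
  is_RS_integral (fun u => \sum_(i <- s) F i u) g a b (\sum_(i <- s) I i).
Proof.
move=> HF; elim: s => [|i s IH].
  have := is_RS_integral_const 0 g a b; rewrite mul0r big_nil.
  by apply: is_RS_integral_eq => u _; rewrite big_nil.
rewrite big_cons; apply: is_RS_integral_eq (is_RS_integralD (HF i) IH) => u _.
by rewrite big_cons.
Qed.

Lemma is_RS_integral_norm_le f g V a b M I : a < b -> controlled g V a b ->
  bounded_on f a b M -> is_RS_integral f g a b I -> `|I| <= M * (V b - V a).
Proof.
move=> ab gV fM /is_RS_integralP H; apply/ler_addgt0Pr => e /H [dl dl0 Hdl].
have [n [x P]] := tagged_partition_exists ab dl0.
have sumM : `|RS_sum f g n x x| <= M * (V b - V a).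
  have [x0 xn Px] := P.
  rewrite -xn -x0 -(telescope_sumr_ord (V \o x)) mulr_sumr.
  apply: le_trans (ler_norm_sum _ _ _) _; apply: ler_sum => j _.
  have [xj _ _] := Px j (ltn_ord j); have [aj jb] := tagged_partition_cell P (ltn_ord j).
  rewrite normrM; apply: ler_pM => //; first exact/fM/(tagged_partition_tag P).
  exact: gV aj (ltW xj) jb.
rewrite -[I](subrK (RS_sum f g n x x)) addrC; apply: le_trans (ler_normD _ _) _.
by rewrite distrC; apply: lerD sumM (ltW (Hdl _ _ _ P)).
Qed.

Section Concatenation.
Variables (n : nat) (x y tau sg : nat -> R).

Definition concat_points j : R := if (j <= n)%N then x j else y (j - n)%N.
Definition concat_tags j : R := if (j < n)%N then tau j else sg (j - n)%N.

Lemma concat_pointsl j : (j <= n)%N -> concat_points j = x j.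
Proof. by rewrite /concat_points => ->. Qed.

Lemma concat_pointsr k : x n = y 0%N -> concat_points (n + k) = y k.
Proof.
rewrite /concat_points => xy; case: k => [|k]; first by rewrite addn0 leqnn xy.
by rewrite leqNgt addnS ltnS leq_addr /= -addnS addKn.
Qed.

Lemma concat_tagsl j : (j < n)%N -> concat_tags j = tau j.
Proof. by rewrite /concat_tags => ->. Qed.

Lemma concat_tagsr k : concat_tags (n + k) = sg k.
Proof. by rewrite /concat_tags ltnNge leq_addr /= addKn. Qed.

Lemma tagged_partition_concat f g a b c dl m :
  tagged_partition a b dl n x tau -> tagged_partition b c dl m y sg ->
  tagged_partition a c dl (n + m) concat_points concat_tags /\
  RS_sum f g (n + m) concat_points concat_tags = RS_sum f g n x tau + RS_sum f g m y sg.
Proof.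
move=> [x0 xn Px] [y0 ym Py]; have xy : x n = y 0%N by rewrite xn y0.
split; first split.
- by rewrite concat_pointsl.
- by rewrite concat_pointsr.
- move=> j jnm; have [jn|nj] := ltnP j n.
    by rewrite !concat_pointsl ?concat_tagsl //; [apply: Px | apply: ltnW].
  rewrite -(subnKC nj) -addnS !concat_pointsr // concat_tagsr.
  by apply: Py; rewrite ltn_subLR.
rewrite /RS_sum big_split_ord /=; congr (_ + _); apply: eq_bigr => i _.
  by rewrite concat_tagsl // !concat_pointsl // ltnW.
by rewrite concat_tagsr -addnS !concat_pointsr.
Qed.

End Concatenation.

Lemma is_RS_integral_concat f g a b c I J K : a < b -> b < c ->
  is_RS_integral f g a b I -> is_RS_integral f g b c J ->
  is_RS_integral f g a c K -> K = I + J.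
Proof.
move=> ab bc /is_RS_integralP HI /is_RS_integralP HJ /is_RS_integralP HK.
apply/eqP; rewrite -subr_eq0 -normr_le0; apply/ler_addgt0Pr => e e0.
have e3 : 0 < e / 3 by rewrite divr_gt0.
have [d1 d10 Hd1] := HI _ e3; have [d2 d20 Hd2] := HJ _ e3.
have [d3 d30 Hd3] := HK _ e3.
have d0 : 0 < Num.min d3 (Num.min d1 d2) by rewrite !lt_min d10 d20 d30.
have [n [x P]] := tagged_partition_exists ab d0.
have [m [y Q]] := tagged_partition_exists bc d0.
have [PQ sumPQ] := tagged_partition_concat f g P Q.
have hI := Hd1 _ _ _ (tagged_partition_minl (tagged_partition_minr P)).
have hJ := Hd2 _ _ _ (tagged_partition_minr (tagged_partition_minr Q)).
have := Hd3 _ _ _ (tagged_partition_minl PQ); rewrite sumPQ => hK.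
have -> : K - (I + J) = (RS_sum f g n x x - I) + (RS_sum f g m y y - J) -
    (RS_sum f g n x x + RS_sum f g m y y - K) by ring.
rewrite add0r (_ : e = e / 3 + e / 3 + e / 3); last by field.
apply/ltW/(le_lt_trans (ler_normB _ _))/ltrD => //.
exact: le_lt_trans (ler_normD _ _) (ltrD hI hJ).
Qed.

End RiemannStieltjesProperties.

Section IndefiniteIntegral.
Variables (R : realType) (s T : R) (V : R -> R).
Hypothesis sT : s < T.

Section OneIntegrand.
Variables (f al : R -> R) (M : R).
Hypotheses (alV : controlled al V s T) (uf : unif_cont_on f s T)
  (fM : bounded_on f s T M).
Local Notation F := (RS_int f al s).

Lemma RS_int_is_integral u : s < u -> u <= T -> is_RS_integral f al s u (F u).
Proof.
move=> su uT.
have [I HI] := RS_integral_exists su (controlled_sub (lexx s) uT alV)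
  (unif_cont_on_sub (lexx s) uT uf).
by rewrite (RS_intE su HI).
Qed.

Lemma RS_int_incr u v : s <= u -> u < v -> v <= T ->
  is_RS_integral f al u v (F v - F u).
Proof.
move=> su uv vT.
have [us|s_neq_u] := eqVneq s u.
  by rewrite -us in uv *; rewrite RS_int_id subr0; apply: RS_int_is_integral.
have su' : s < u by rewrite lt_neqAle s_neq_u su.
have [I HI] := RS_integral_exists uv (controlled_sub su vT alV)
  (unif_cont_on_sub su vT uf).
rewrite (is_RS_integral_concat su' uv (RS_int_is_integral su' (ltW (lt_le_trans uv vT)))
  HI (RS_int_is_integral (lt_trans su' uv) vT)).
by rewrite addrAC subrr add0r.
Qed.

Lemma bounded_on_ge0 : 0 <= M.
Proof.
have ss : s <= s <= T by rewrite lexx ltW.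
exact: le_trans (normr_ge0 _) (fM ss).
Qed.

Lemma RS_int_incr_le u v : s <= u -> u <= v -> v <= T ->
  `|F v - F u| <= M * (V v - V u).
Proof.
move=> su uv vT.
have [<-|uv'] := eqVneq u v; first by rewrite !subrr normr0 mulr0.
have {uv'}uv : u < v by rewrite lt_neqAle uv' uv.
apply: is_RS_integral_norm_le uv (controlled_sub su vT alV) _ (RS_int_incr su uv vT).
by move=> w /andP [uw wv]; apply: fM; rewrite (le_trans su uw) (le_trans wv vT).
Qed.

Lemma RS_int_bounded : bounded_on F s T (M * (V T - V s)).
Proof.
move=> u /andP [su uT].
have := RS_int_incr_le (lexx s) su uT; rewrite RS_int_id subr0 => /le_trans; apply.
apply: ler_wpM2l; first exact: bounded_on_ge0.
by have := alV su uT (lexx T); have := normr_ge0 (al T - al u); lra.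
Qed.

Lemma RS_int_dist_le u v : s <= u <= T -> s <= v <= T ->
  `|F u - F v| <= M * `|V u - V v|.
Proof.
wlog uv : u v / u <= v => [wlog_uv hu hv|/andP [su _] /andP [_ vT]].
  have [uv|/ltW vu] := leP u v; first exact: wlog_uv.
  by rewrite distrC [`|V u - _|]distrC; apply: wlog_uv.
rewrite distrC [`|V u - _|]distrC; apply: le_trans (RS_int_incr_le su uv vT) _.
by apply: ler_wpM2l; [exact: bounded_on_ge0 | exact: ler_norm].
Qed.

Lemma RS_int_unif_cont : unif_cont_on V s T -> unif_cont_on F s T.
Proof.
move=> uV e e0; have M1 : 0 < M + 1 by have := bounded_on_ge0; lra.
have [dl dl0 Hdl] := uV _ (divr_gt0 e0 M1); exists dl => // u v hu hv uv.
apply: le_lt_trans (RS_int_dist_le hu hv) _.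
apply: le_lt_trans (_ : M * (e / (M + 1)) < e).
  by apply: ler_wpM2l; [exact: bounded_on_ge0 | exact: ltW (Hdl _ _ hu hv uv)].
by rewrite mulrA ltr_pdivrMr // mulrDr mulr1 mulrC ltrDl.
Qed.

Lemma RS_int_incr_approx u v eps : s <= u -> u < v -> v <= T ->
  (forall w, u <= w <= v -> `|f w - f u| <= eps) ->
  `|(F v - F u) - f u * (al v - al u)| <= eps * (V v - V u).
Proof.
move=> su uv vT near_fu.
have := is_RS_integralD (RS_int_incr su uv vT) (is_RS_integral_const (- f u) al u v).
by rewrite mulNr; apply: is_RS_integral_norm_le uv (controlled_sub su vT alV) _.
Qed.

End OneIntegrand.

Section Product.
Variables (f g al be : R -> R) (Mf Mg : R).
Hypotheses (alV : controlled al V s T) (beV : controlled be V s T)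
  (uf : unif_cont_on f s T) (ug : unif_cont_on g s T)
  (fM : bounded_on f s T Mf) (gM : bounded_on g s T Mg).
Local Notation F := (RS_int f al s).
Local Notation G := (RS_int g be s).
Local Notation K := (Mf * (V T - V s) + Mg + Mg * (V T - V s)).

Lemma RS_int_product_incr u v eta : s <= u -> u < v -> v <= T ->
  (forall w, u <= w <= v -> `|f w - f u| <= eta) ->
  (forall w, u <= w <= v -> `|g w - g u| <= eta) ->
  `|F v - F u| <= eta ->
  `|(F v * G v - F u * G u) - (F u * g u * (be v - be u) + G u * f u * (al v - al u))|
    <= eta * K * (V v - V u).
Proof.
move=> su uv vT near_f near_g near_F.
have uT : s <= u <= T by rewrite su (le_trans (ltW uv) vT).
have vT' : s <= v <= T by rewrite vT (le_trans su (ltW uv)).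
have eta0 : 0 <= eta.
  by apply: le_trans (normr_ge0 _) (near_f u _); rewrite lexx (ltW uv).
have dV0 : 0 <= V v - V u := controlled_ge0 (ltW uv) (controlled_sub su vT alV).
have bF : `|F v * ((G v - G u) - g u * (be v - be u))|
    <= Mf * (V T - V s) * (eta * (V v - V u)).
  rewrite normrM; apply: ler_pM => //; first exact: RS_int_bounded.
  exact: RS_int_incr_approx.
have bFg : `|(F v - F u) * g u * (be v - be u)| <= eta * Mg * (V v - V u).
  rewrite !normrM; apply: ler_pM; rewrite ?mulr_ge0 //; last exact: beV su (ltW uv) vT.
  by apply: ler_pM => //; apply: gM.
have bG : `|G u * ((F v - F u) - f u * (al v - al u))|
    <= Mg * (V T - V s) * (eta * (V v - V u)).
  rewrite normrM; apply: ler_pM => //; first exact: RS_int_bounded.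
  exact: RS_int_incr_approx.
have -> : F v * G v - F u * G u - (F u * g u * (be v - be u) + G u * f u * (al v - al u))
  = F v * ((G v - G u) - g u * (be v - be u)) + (F v - F u) * g u * (be v - be u)
    + G u * ((F v - F u) - f u * (al v - al u)) by ring.
have -> : eta * K * (V v - V u) = Mf * (V T - V s) * (eta * (V v - V u))
  + eta * Mg * (V v - V u) + Mg * (V T - V s) * (eta * (V v - V u)) by ring.
apply: le_trans (ler_normD _ _) (lerD _ bG).
exact: le_trans (ler_normD _ _) (lerD bF bFg).
Qed.

Lemma RS_int_product_sum_approx t eta : unif_cont_on V s T ->
  s < t -> t <= T -> 0 < eta ->
  exists2 dl, 0 < dl & forall n x, tagged_partition s t dl n x x ->
  `|F t * G t - (RS_sum (fun u => F u * g u) be n x x +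
                 RS_sum (fun u => G u * f u) al n x x)| <= eta * K * (V t - V s).
Proof.
move=> uV st tT eta0.
have [d1 d10 H1] := uf eta0; have [d2 d20 H2] := ug eta0.
have [d3 d30 H3] := RS_int_unif_cont alV uf fM uV eta0.
exists (Num.min d1 (Num.min d2 d3)) => [|n x P]; first by rewrite !lt_min d10 d20 d30.
have [x0 xn Px] := P.
have -> : F t * G t = \sum_(j < n) (F (x j.+1) * G (x j.+1) - F (x j) * G (x j)).
  by rewrite (telescope_sumr_ord (fun j => F (x j) * G (x j))) xn x0 RS_int_id mul0r subr0.
have <- : \sum_(j < n) (V (x j.+1) - V (x j)) = V t - V s.
  by rewrite (telescope_sumr_ord (V \o x)) /= xn x0.
rewrite /RS_sum -big_split -sumrB mulr_sumr /=.
apply: le_trans (ler_norm_sum _ _ _) _; apply: ler_sum => j _.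
have [xj mesh _] := Px j (ltn_ord j); have [sj jt] := tagged_partition_cell P (ltn_ord j).
have jT := le_trans jt tT.
have in_sT w : x j <= w <= x j.+1 -> s <= w <= T.
  by case/andP=> jw wj; rewrite (le_trans sj jw) (le_trans wj jT).
have close w : x j <= w <= x j.+1 -> `|w - x j| < Num.min d1 (Num.min d2 d3).
  case/andP=> jw wj; rewrite ger0_norm ?subr_ge0 //.
  by apply: le_lt_trans mesh; rewrite lerB.
have xj_in : x j <= x j <= x j.+1 by rewrite lexx ltW.
have xj1_in : x j <= x j.+1 <= x j.+1 by rewrite lexx ltW.
apply: RS_int_product_incr sj xj jT _ _ _.
- move=> w /[dup] /close wj /in_sT ws; apply/ltW/H1 => //; first exact: in_sT xj_in.
  by apply: lt_le_trans wj _; rewrite ge_min lexx.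
- move=> w /[dup] /close wj /in_sT ws; apply/ltW/H2 => //; first exact: in_sT xj_in.
  by apply: lt_le_trans wj _; rewrite !ge_min lexx orbT.
- apply/ltW/H3; [exact: in_sT xj1_in | exact: in_sT xj_in |].
  by apply: lt_le_trans (close _ xj1_in) _; rewrite !ge_min lexx !orbT.
Qed.

Lemma RS_int_product t A B : unif_cont_on V s T -> s < t -> t <= T ->
  is_RS_integral (fun u => F u * g u) be s t A ->
  is_RS_integral (fun u => G u * f u) al s t B ->
  F t * G t = A + B.
Proof.
move=> uV st tT /is_RS_integralP HA /is_RS_integralP HB.
have K0 : 0 <= K * (V t - V s).
  have VT0 := controlled_ge0 (ltW sT) alV.
  have Vt0 := controlled_ge0 (ltW st) (controlled_sub (lexx s) tT alV).
  have Mf0 := bounded_on_ge0 fM; have Mg0 := bounded_on_ge0 gM.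
  apply: mulr_ge0 Vt0; apply: addr_ge0 (mulr_ge0 Mg0 VT0).
  exact: addr_ge0 (mulr_ge0 Mf0 VT0) Mg0.
apply/eqP; rewrite -subr_eq0 -normr_le0; apply/ler_addgt0Pr => e e0; rewrite add0r.
set C := K * (V t - V s) + 2; have C0 : 0 < C by rewrite /C; lra.
have eta0 : 0 < e / C by rewrite divr_gt0.
have [d1 d10 H1] := HA _ eta0; have [d2 d20 H2] := HB _ eta0.
have [d3 d30 H3] := RS_int_product_sum_approx uV st tT eta0.
have d0 : 0 < Num.min d3 (Num.min d1 d2) by rewrite !lt_min d10 d20 d30.
have [n [x P]] := tagged_partition_exists st d0.
have h3 := H3 _ _ (tagged_partition_minl P).
have hA := H1 _ _ _ (tagged_partition_minl (tagged_partition_minr P)).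
have hB := H2 _ _ _ (tagged_partition_minr (tagged_partition_minr P)).
set rA := RS_sum _ be n x x in h3 hA; set rB := RS_sum _ al n x x in h3 hB.
have -> : F t * G t - (A + B) = (F t * G t - (rA + rB)) + (rA - A) + (rB - B) by ring.
have -> : e = e / C * K * (V t - V s) + e / C + e / C.
  by move: C0; rewrite /C => C0; field; rewrite gt_eqF.
apply: le_trans (ler_normD _ _) (lerD _ (ltW hB)).
exact: le_trans (ler_normD _ _) (lerD h3 (ltW hA)).
Qed.

End Product.

End IndefiniteIntegral.

Section ContinuityAndVariation.
Variable R : realType.
Implicit Types (f g V : R -> R) (a b : R).

Lemma controlled_total_variation f a b : bounded_variation a b f ->
  controlled f (fun u => fine (total_variation a u f)) a b.
Proof.
move=> bv u v au uv vb.
have bav : bounded_variation a v f := bounded_variationl (le_trans au uv) vb bv.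
have fin_au : total_variation a u f \is a fin_num.
  by apply/bounded_variationP => //; apply: bounded_variationl au (le_trans uv vb) bv.
have fin_uv : total_variation u v f \is a fin_num.
  by apply/bounded_variationP => //; apply: bounded_variationr au uv bav.
rewrite (total_variationD f au uv) fineD // addrAC subrr add0r.
by rewrite -lee_fin fineK //; apply: total_variation_ge.
Qed.

Lemma unif_cont_onD f g a b : unif_cont_on f a b -> unif_cont_on g a b ->
  unif_cont_on (fun u => f u + g u) a b.
Proof.
move=> uf ug e e0; have e2 : 0 < e / 2 by rewrite divr_gt0.
have [d1 d10 H1] := uf _ e2; have [d2 d20 H2] := ug _ e2.
exists (Num.min d1 d2) => [|u v hu hv]; first by rewrite lt_min d10 d20.
rewrite lt_min => /andP [uv1 uv2]; rewrite opprD addrACA [e]splitr.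
exact: le_lt_trans (ler_normD _ _) (ltrD (H1 _ _ hu hv uv1) (H2 _ _ hu hv uv2)).
Qed.

Lemma unif_cont_on_sum (I : Type) (s : seq I) (F : I -> R -> R) a b :
  (forall i, unif_cont_on (F i) a b) -> unif_cont_on (fun u => \sum_(i <- s) F i u) a b.
Proof.
move=> uF; elim: s => [|i s IH].
  by move=> e e0; exists 1 => // u v *; rewrite !big_nil subrr normr0.
have -> : (fun u => \sum_(j <- i :: s) F j u) = (fun u => F i u + \sum_(j <- s) F j u).
  by apply/funext => u; rewrite big_cons.
exact: unif_cont_onD.
Qed.

Lemma continuous_within_dist f (A : set R) u : {within A, continuous f} -> A u ->
  forall e, 0 < e -> exists2 dl, 0 < dl &
    forall v, A v -> `|u - v| < dl -> `|f u - f v| < e.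
Proof.
move=> cf Au e e0.
have : f @ within A (nbhs u) --> f u by rewrite nbhs_subspace_in //; exact: cf.
move=> /cvgrPdist_lt /(_ e e0) /nbhs_ballP [dl dl0 Hdl].
by exists dl => // v Av uv; apply: Hdl.
Qed.

Lemma continuous_unif_cont_on f a b : {within `[a, b], continuous f} ->
  unif_cont_on f a b.
Proof.
move=> cf e e0; have e2 : 0 < e / 2 by rewrite divr_gt0.
have /compact_near_coveringP/near_covering_withinP cover := @segment_compact R a b.
have : \forall dl \near (0:R)^'+, `[a, b]%classic `<=`
    (fun u => forall v, v \in `[a, b] -> `|u - v| < dl -> `|f u - f v| < e).
  apply: cover => u abu.
  have [eta eta0 Heta] := continuous_within_dist cf abu e2.
  have eta2 : 0 < eta / 2 by rewrite divr_gt0.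
  near=> u' dl => abu' v abv u'v.
  have uu' : `|u - u'| < eta / 2.
    by near: u'; apply/nbhs_ballP; exists (eta / 2) => //= z; rewrite -ball_normE.
  have dl_small : dl < eta / 2 by near: dl; apply: nbhs_right_lt.
  have uv : `|u - v| < eta.
    apply: le_lt_trans (ler_distD u' _ _) _; rewrite [eta]splitr.
    exact: ltrD uu' (lt_trans u'v dl_small).
  apply: le_lt_trans (ler_distD (f u) _ _) _; rewrite distrC [e]splitr.
  by apply: ltrD (Heta _ abu' _) (Heta _ abv uv); lra.
move=> /nbhs_ballP [r r0 Hr].
have r2 : 0 < r / 2 by rewrite divr_gt0.
exists (r / 2) => // u v hu hv; apply: (Hr (r / 2)) => //=.
by rewrite -ball_normE /= sub0r normrN gtr0_norm // ltr_pdivrMr // ltr_pMr // ltr1n.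
Unshelve. all: by end_near.
Qed.

End ContinuityAndVariation.

Fixpoint shuffle (I : Type) (r q : seq I) : seq (seq I) :=
  match r with
  | [::] => [:: q]
  | a :: r' =>
    let fix shuffle_r q :=
      match q with
      | [::] => [:: r]
      | b :: q' => map (cons a) (shuffle r' q) ++ map (cons b) (shuffle_r q')
      end in shuffle_r q
  end.

Lemma shuffle0s (I : Type) (r : seq I) : shuffle r [::] = [:: r].
Proof. by case: r. Qed.

Lemma shuffle_cons (I : Type) (a b : I) r q : shuffle (a :: r) (b :: q) =
  map (cons a) (shuffle r (b :: q)) ++ map (cons b) (shuffle (a :: r) q).
Proof. by []. Qed.

Section ShuffleIdentity.
Variables (R : realType) (d : nat) (gamma : 'I_d -> R -> R) (s T : R) (V : R -> R).
Hypotheses (sT : s < T) (uV : unif_cont_on V s T)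
  (gammaV : forall i, controlled (gamma i) V s T).
Local Notation X := (sig_rev gamma s).

Lemma sig_rev_regular r :
  unif_cont_on (X r) s T /\ exists M, bounded_on (X r) s T M.
Proof.
elim: r => [|i r [uX [M XM]]].
  by split; [exists 1 => // *; rewrite subrr normr0 | exists 1 => u _; rewrite normr1].
split; first exact (RS_int_unif_cont sT (gammaV i) uX XM uV).
by exists (M * (V T - V s)); exact (RS_int_bounded sT (gammaV i) uX XM).
Qed.

Lemma sig_rev_is_integral r i t : s < t -> t <= T ->
  is_RS_integral (X r) (gamma i) s t (X (i :: r) t).
Proof.
move=> st tT; have [uX _] := sig_rev_regular r.
exact (RS_int_is_integral (gammaV i) uX st tT).
Qed.

(* [sig_rev] reads words backwards, so the recursion of [shuffle] on first
   letters is integration by parts in the last integration variable. *)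
Lemma sig_rev_shuffle r q t : s <= t -> t <= T ->
  X r t * X q t = \sum_(w <- shuffle r q) X w t.
Proof.
elim: r q t => [|a r IHr] q t st tT; first by rewrite big_seq1 mul1r.
elim: q t st tT => [|b q IHq] t st tT; first by rewrite shuffle0s big_seq1 mulr1.
rewrite shuffle_cons big_cat !big_map /=.
have [<-|st'] := eqVneq s t.
  by rewrite !RS_int_id mul0r !big1 ?addr0 // => w _; rewrite /= RS_int_id.
have {st'}st : s < t by rewrite lt_neqAle st' st.
have [ur [Mr rM]] := sig_rev_regular r; have [uq [Mq qM]] := sig_rev_regular q.
have int_sum r' q' c :
    (forall u, s <= u <= t -> X r' u * X q' u = \sum_(w <- shuffle r' q') X w u) ->
    is_RS_integral (fun u => X r' u * X q' u) (gamma c) s t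
      (\sum_(w <- shuffle r' q') X (c :: w) t).
  move=> shuf.
  apply: (is_RS_integral_eq (f1 := fun u => \sum_(w <- shuffle r' q') X w u)) => [u /shuf //|].
  by apply: is_RS_integral_sum => w; apply: sig_rev_is_integral.
have HA : is_RS_integral (fun u => X (a :: r) u * X q u) (gamma b) s t
    (\sum_(w <- shuffle (a :: r) q) X (b :: w) t).
  by apply: int_sum => u /andP [su ut]; apply: IHq su (le_trans ut tT).
have HB : is_RS_integral (fun u => X (b :: q) u * X r u) (gamma a) s t
    (\sum_(w <- shuffle r (b :: q)) X (a :: w) t).
  apply: is_RS_integral_eq (int_sum r (b :: q) a _) => [u _|]; first by rewrite mulrC.
  by move=> u /andP [su ut]; apply: IHr su (le_trans ut tT).
rewrite addrC.
exact (RS_int_product sT (gammaV a) (gammaV b) ur uq rM qM uV st tT HA HB).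
Qed.

End ShuffleIdentity.

Section Characters.
Variables (F : idomainType) (W : Type) (mul : W -> W -> seq W) (one : W).

Definition is_character (chi : W -> F) :=
  chi one = 1 /\ forall u v, chi u * chi v = \sum_(w <- mul u v) chi w.

Lemma character_relationM n (chi : 'I_n -> W -> F) (c : 'I_n -> F) u :
  (forall j, is_character (chi j)) ->
  (forall w, \sum_(j < n) c j * chi j w = 0) ->
  forall w, \sum_(j < n) c j * chi j u * chi j w = 0.
Proof.
move=> chiC rel w; under eq_bigr => j _ do rewrite -mulrA (proj2 (chiC j)) mulr_sumr.
by rewrite exchange_big big1 // => w' _; apply: rel.
Qed.

Lemma characters_free n (chi : 'I_n -> W -> F) (c : 'I_n -> F) :
  injective chi -> (forall j, is_character (chi j)) ->
  (forall w, \sum_(j < n) c j * chi j w = 0) -> forall j, c j = 0.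
Proof.
elim: n chi c => [|n IH] chi c chi_inj chiC rel; first by case.
pose wd : 'I_n -> 'I_n.+1 := widen_ord (leqnSn n).
have wd_inj : injective wd by move=> i1 i2 /(congr1 val) /= /val_inj.
have c_wd k : c (wd k) = 0.
  have [u chi_u] : exists u, chi (wd k) u <> chi ord_max u.
    apply/existsNP => same; have /chi_inj/(congr1 val)/eqP := funext same.
    by rewrite /= ltn_eqF.
  pose c' i := c (wd i) * (chi (wd i) u - chi ord_max u).
  have rel' w : \sum_(i < n) c' i * chi (wd i) w = 0.
    have full : \sum_(j < n.+1) c j * (chi j u - chi ord_max u) * chi j w = 0.
      under eq_bigr => j _ do rewrite mulrBr mulrBl [_ * chi ord_max u * _]mulrAC.
      by rewrite sumrB character_relationM // -mulr_suml rel mul0r subrr.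
    by rewrite big_ord_recr /= subrr mulr0 mul0r addr0 in full.
  have chi_wd_inj : injective (chi \o wd) by move=> i j /chi_inj/wd_inj.
  have /eqP := IH _ c' chi_wd_inj (fun i => chiC (wd i)) rel' k.
  by rewrite mulf_eq0 subr_eq0 => /orP [/eqP //|/eqP].
have c_max : c ord_max = 0.
  have := rel one; rewrite big_ord_recr /= big1 ?add0r => [|i _].
    by rewrite (proj1 (chiC _)) mulr1.
  by rewrite c_wd mul0r.
move=> j; case: (unliftP ord_max j) => [k ->|->] //.
by rewrite (_ : lift ord_max k = wd k) ?c_wd //; apply/val_inj/lift_max.
Qed.

End Characters.

Lemma signature_is_character (R : realType) (d : nat) (gamma : 'I_d -> R -> R) s t :
  s < t -> cont_BV_path gamma s t ->
  is_character (fun u v => map rev (shuffle (rev u) (rev v))) [::] (signature gamma s t).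
Proof.
move=> st path_gamma.
have bv i : bounded_variation s t (gamma i) by case: (path_gamma i).
pose V u := \sum_(i < d) fine (total_variation s u (gamma i)).
have gammaV i : controlled (gamma i) V s t.
  move=> u v su uv vt; rewrite /V -sumrB (bigD1 i) //=.
  apply: le_trans (controlled_total_variation (bv i) su uv vt) _.
  rewrite lerDl; apply: sumr_ge0 => k _.
  exact: le_trans (normr_ge0 _) (controlled_total_variation (bv k) su uv vt).
have uV : unif_cont_on V s t.
  apply: unif_cont_on_sum => i; apply: continuous_unif_cont_on.
  by apply: total_variation_continuous st _ (bv i); case: (path_gamma i).
split=> // u v; rewrite /signature (sig_rev_shuffle st uV gammaV) ?lexx ?ltW //.
by rewrite big_map; apply: eq_bigr => w _; rewrite revK.
Qed.

Theorem mainTheorem16 (R : realType) (d n : nat)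
    (X : 'I_n -> tensor_series R d) (c : 'I_n -> R) :
  injective X ->
  (forall j, @signatures R d (X j)) ->
  (forall w : seq 'I_d, \sum_(j < n) c j * X j w = 0) ->
  forall j, c j = 0.
Proof.
move=> X_inj X_sig; apply: characters_free X_inj _ => j.
have [gamma [s [t [st path_gamma ->]]]] := X_sig j.
exact: signature_is_character.
Qed.
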